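(* Let $k\geq 2$ be an integer and $G$ a graph. Suppose $f=u_1\dots u_{k-1}$ is a copy of $K_{k-1}$ in $G$ which is a copy of $K_{k-1}$ of two distinct $K_{k+1}$-components $C_1$ and $C_2$ of $G$. Let $uv$ and $wu_k$ be edges of $G$ such that the $k$-cliques $fu$ and $fv$ belong to $C_1$ and the $k$-cliques $fw$ and $fu_k$ belong to $C_2$. Then for each $i\in[k-1]$, the common neighbourhood $\Gamma(u_1,\dots,u_{i-1},u_{i+1},\dots,u_k,w,u,v)$ is an independent set.
   Context: A $K_{k+1}$-walk in $G$ is a sequence of copies of $K_k$ in which consecutive copies lie in a common copy of $K_{k+1}$; the endpoints are then $K_{k+1}$-connected, and the equivalence classes of copies of $K_k$ are the $K_{k+1}$-components. A copy of $K_{k-1}$ is a copy of $K_{k-1}$ of a component $C$ if it extends to a copy of $K_k$ in $C$. For a clique $f$ and vertex $x$ adjacent to all of $f$, $fx$ denotes the clique $f\cup\{x\}$. $\Gamma(x_1,\dots,x_s)$ denotes the set of common neighbours of $x_1,\dots,x_s$ in $G$. *)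

From mathcomp Require Import all_boot.
Set Implicit Arguments. Unset Strict Implicit. Unset Printing Implicit Defensive.

(* A (finite simple) graph: vertex type T : finType, adjacency G : rel T,
   assumed symmetric and irreflexive in the theorem. *)

Section Cliques.
Variables (T : finType) (G : rel T).

Definition is_clique (S : {set T}) : bool :=
  [forall x in S, forall y in S, (x != y) ==> G x y].

Definition kclique (k : nat) (S : {set T}) : bool :=
  is_clique S && (#|S| == k).

Definition kstep (k : nat) (A B : {set T}) : bool :=
  [&& kclique k A, kclique k B &
      [exists K : {set T}, [&& kclique k.+1 K, A \subset K & B \subset K]]].

Definition kconn (k : nat) (A B : {set T}) : bool := connect (kstep k) A B.

(* C is a K_(k+1)-component: an equivalence class of copies of K_k *)
Definition is_kcomponent (k : nat) (C : {set {set T}}) : Prop :=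
  exists2 A : {set T}, kclique k A & C = [set B | kconn k A B].

Definition clique_of_comp (k : nat) (f : {set T}) (C : {set {set T}}) : Prop :=
  kclique k.-1 f /\ exists2 x : T, kclique k (x |: f) & (x |: f) \in C.

Definition common_nbhd (S : {set T}) : {set T} :=
  [set x | [forall y in S, G x y]].

Definition independent (S : {set T}) : bool :=
  [forall x in S, forall y in S, ~~ G x y].

End Cliques.

From mathcomp Require Import all_boot.
Set Implicit Arguments. Unset Strict Implicit. Unset Printing Implicit Defensive.

(* Suppose x and y were adjacent vertices of the common neighbourhood.  Write
   f' for f minus u_i.  Starting from the k-clique fu, the three (k+1)-cliques
   fuv, f'uvx and f'uxy give a K_(k+1)-walk fu, f'uv, f'ux, f'xy; in the same
   way fw is K_(k+1)-connected to f'xy through the edge w u_k.  Hence fu and fw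
   lie in the same K_(k+1)-component, contradicting C1 <> C2. *)

Section Cliques.
Variables (T : finType) (G : rel T).

Lemma is_cliqueP (S : {set T}) :
  reflect {in S &, forall p q, p != q -> G p q} (is_clique G S).
Proof.
apply: (iffP forall_inP) => [cS p q pS qS | cS p pS].
  by move: (cS p pS) => /forall_inP/(_ q qS)/implyP.
by apply/forall_inP => q qS; apply/implyP; apply: cS.
Qed.

Lemma is_cliqueS (A B : {set T}) : A \subset B -> is_clique G B -> is_clique G A.
Proof.
move=> /subsetP AB /is_cliqueP cB; apply/is_cliqueP => p q pA qA.
exact: cB (AB p pA) (AB q qA).
Qed.

Lemma common_nbhdP (S : {set T}) x :
  reflect {in S, forall y, G x y} (x \in common_nbhd G S).
Proof. by rewrite inE; apply: forall_inP. Qed.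
Arguments common_nbhdP {S x}.

Lemma common_nbhdU1 (S : {set T}) a x :
  (x \in common_nbhd G (a |: S)) = G x a && (x \in common_nbhd G S).
Proof.
apply/common_nbhdP/andP => [xaS | [xa /common_nbhdP xS] y].
  by split; [apply: xaS; rewrite setU11 | apply/common_nbhdP => y yS;
    apply: xaS; rewrite setU1r].
by rewrite in_setU1 => /predU1P[-> | /xS].
Qed.

Lemma common_nbhdS (A B : {set T}) x :
  A \subset B -> x \in common_nbhd G B -> x \in common_nbhd G A.
Proof. by move=> /subsetP AB /common_nbhdP xB; apply/common_nbhdP => y /AB /xB. Qed.

Lemma clique_nbhdD1 (A : {set T}) c :
  is_clique G A -> c \in A -> c \in common_nbhd G (A :\ c).
Proof.
move=> /is_cliqueP cA cA_c; apply/common_nbhdP => y /setD1P[yc yA].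
by apply: cA; rewrite // eq_sym.
Qed.

Lemma kcliqueU1_nbhd n (S : {set T}) a :
  #|S| = n -> kclique G n.+1 (a |: S) -> a \in common_nbhd G S.
Proof.
move=> cardS /andP[caS]; rewrite cardsU1 cardS.
case: (boolP (a \in S)) => [_ | aS _]; first by rewrite add0n ltn_eqF.
by rewrite -[S](setU1K aS); apply: clique_nbhdD1 caS (setU11 a S).
Qed.

Lemma kstep_sym k : symmetric (kstep G k).
Proof.
move=> A B; rewrite /kstep andbCA; congr [&& _, _ & _].
by apply/existsP/existsP => -[K /and3P[cK AK BK]]; exists K; rewrite cK AK BK.
Qed.

Hypothesis G_irrefl : irreflexive G.

Lemma common_nbhd_notin (S : {set T}) x : x \in common_nbhd G S -> x \notin S.
Proof. by move=> /common_nbhdP xS; apply/negP => /xS; rewrite G_irrefl. Qed.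

Hypothesis G_sym : symmetric G.

Lemma kcliqueU1 n (S : {set T}) a :
  kclique G n S -> a \in common_nbhd G S -> kclique G n.+1 (a |: S).
Proof.
move=> /andP[/is_cliqueP cS /eqP cardS] aS.
rewrite /kclique cardsU1 (common_nbhd_notin aS) cardS eqxx andbT.
move/common_nbhdP: aS => aS; apply/is_cliqueP => p q.
rewrite !in_setU1 => /predU1P[-> | pS] /predU1P[-> | qS]; rewrite ?eqxx //.
- by move=> _; apply: aS.
- by move=> _; rewrite G_sym; apply: aS.
- exact: cS.
Qed.

Lemma kstep_swap n (R : {set T}) p q :
  kclique G n R -> p \in common_nbhd G R -> q \in common_nbhd G (p |: R) ->
  kstep G n.+1 (p |: R) (q |: R).
Proof.
move=> cR pR qpR.
have qR : q \in common_nbhd G R by apply: common_nbhdS qpR; apply: subsetUr.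
have cpR := kcliqueU1 cR pR.
apply/and3P; split; [exact: cpR | exact: kcliqueU1 | apply/existsP].
exists (q |: (p |: R)); rewrite kcliqueU1 // subsetUr /=.
by apply: setUS; apply: subsetUr.
Qed.

Lemma kconn_edge_swap n (f : {set T}) c a b x y :
  kclique G n.+1 f -> c \in f ->
  a \in common_nbhd G f -> b \in common_nbhd G f -> G a b ->
  x \in common_nbhd G (a |: f :\ c) -> G x b ->
  y \in common_nbhd G (a |: f :\ c) -> G x y ->
  kconn G n.+2 (a |: f) (y |: (x |: f :\ c)).
Proof.
set S := f :\ c => cf fc af bf ab.
rewrite !common_nbhdU1 => /andP[xa xS] xb /andP[ya yS] xy.
have Sf : S \subset f by apply: subsetDl.
have cS : kclique G n S.
  case/andP: cf => /(is_cliqueS Sf) clS /eqP.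
  by rewrite (cardsD1 c) fc add1n => -[cardS]; rewrite /kclique clS cardS eqxx.
have aS := common_nbhdS Sf af; have bS := common_nbhdS Sf bf.
have caS := kcliqueU1 cS aS; have cxS := kcliqueU1 cS xS.
have fE : f = c |: S by rewrite setD1K.
have ca_ba : kstep G n.+2 (c |: (a |: S)) (b |: (a |: S)).
  apply: kstep_swap => //; last by rewrite setUCA -fE common_nbhdU1 G_sym ab bf.
  by rewrite common_nbhdU1 G_sym (common_nbhdP af c fc) clique_nbhdD1 //; case/andP: cf.
have ba_xa : kstep G n.+2 (b |: (a |: S)) (x |: (a |: S)).
  apply: kstep_swap => //; first by rewrite common_nbhdU1 G_sym ab bS.
  by rewrite !common_nbhdU1 xb xa xS.
have ax_yx : kstep G n.+2 (a |: (x |: S)) (y |: (x |: S)).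
  apply: kstep_swap => //; first by rewrite common_nbhdU1 G_sym xa aS.
  by rewrite !common_nbhdU1 ya G_sym xy yS.
rewrite fE setUCA; apply: connect_trans (connect1 ca_ba) _.
apply: connect_trans (connect1 ba_xa) _.
by rewrite setUCA; apply: connect1 ax_yx.
Qed.

End Cliques.

Section Components.
Variables (T : finType) (G : rel T) (k : nat).

Lemma kcomponent_kclique C (A : {set T}) :
  is_kcomponent G k C -> A \in C -> kclique G k A.
Proof.
case=> A0 cA0 ->; rewrite inE => /connectP[p walk ->] {A}.
elim: p A0 cA0 walk => //= B p IHp A0 _ /andP[/and3P[_ cB _]].
exact: IHp.
Qed.

Lemma kcomponentE C (A : {set T}) :
  is_kcomponent G k C -> A \in C -> C = [set B | kconn G k A B].
Proof.
case=> A0 _ -> {C}; rewrite inE => A0A; apply/setP => B; rewrite !inE.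
exact: (same_connect (sym_connect_sym (@kstep_sym T G k)) A0A B).
Qed.

Lemma kcomponent_eq C1 C2 (A1 A2 B : {set T}) :
  is_kcomponent G k C1 -> is_kcomponent G k C2 -> A1 \in C1 -> A2 \in C2 ->
  kconn G k A1 B -> kconn G k A2 B -> C1 = C2.
Proof.
move=> compC1 compC2 A1C1 A2C2 A1B A2B.
have kstepS := sym_connect_sym (@kstep_sym T G k).
have A2C1 : A2 \in C1.
  rewrite (kcomponentE compC1 A1C1) inE; apply: connect_trans A1B _.
  by rewrite /kconn kstepS.
by rewrite (kcomponentE compC1 A2C1) (kcomponentE compC2 A2C2).
Qed.

End Components.

Theorem lemma5p2 (T : finType) (G : rel T) (k : nat) (uu : 'I_k.-1 -> T)
    (uk u v w : T) (C1 C2 : {set {set T}}) :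
  symmetric G -> irreflexive G -> 2 <= k ->
  let f := [set uu j | j : 'I_k.-1] in
  kclique G k.-1 f ->
  is_kcomponent G k C1 -> is_kcomponent G k C2 -> C1 <> C2 ->
  clique_of_comp G k f C1 -> clique_of_comp G k f C2 ->
  G u v -> G w uk ->
  (u |: f) \in C1 -> (v |: f) \in C1 ->
  (w |: f) \in C2 -> (uk |: f) \in C2 ->
  forall i : 'I_k.-1,
    independent G (common_nbhd G
      ([set uu j | j : 'I_k.-1 & j != i] :|: [set uk; w; u; v])).
Proof.
case: k uu => [|[|n]] uu G_sym G_irrefl; [by [] | by [] | move=> _ f cf].
move=> compC1 compC2 C1C2 _ _ uv wuk uC1 vC1 wC2 ukC2 i.
set N := _ :|: [set uk; w; u; v]; set c := uu i.
have fc : c \in f by apply: imset_f.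
have nbhd_f z C : is_kcomponent G n.+2 C -> z |: f \in C -> z \in common_nbhd G f.
  move=> compC /(kcomponent_kclique compC).
  by apply: kcliqueU1_nbhd; case/andP: cf => _ /eqP.
have nbhd_N a z : a \in [set uk; w; u; v] ->
    z \in common_nbhd G N -> z \in common_nbhd G (a |: f :\ c).
  move=> aN; apply: common_nbhdS; apply/subsetP => t.
  rewrite in_setU1 => /predU1P[-> | /setD1P[tc /imsetP[j _ tj]]];
    first by rewrite inE aN orbT.
  apply/setUP; left; apply/imsetP; exists j => //.
  by rewrite inE; apply: contraNneq tc => ji; rewrite tj ji.
have adj_N a z : a \in [set uk; w; u; v] -> z \in common_nbhd G N -> G z a.
  by move=> aN /(nbhd_N a z aN); rewrite common_nbhdU1 => /andP[].
have [uN vN wN ukN] : [/\ u \in [set uk; w; u; v], v \in [set uk; w; u; v],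
    w \in [set uk; w; u; v] & uk \in [set uk; w; u; v]] by rewrite !inE !eqxx !orbT.
apply/forall_inP => x xN; apply/forall_inP => y yN; apply/negP => xy; apply: C1C2.
apply: (kcomponent_eq compC1 compC2 uC1 wC2 (B := y |: (x |: f :\ c))).
  apply: kconn_edge_swap (nbhd_N _ _ uN xN) (adj_N _ _ vN xN) (nbhd_N _ _ uN yN) xy;
    by rewrite // (nbhd_f _ C1).
apply: kconn_edge_swap (nbhd_N _ _ wN xN) (adj_N _ _ ukN xN) (nbhd_N _ _ wN yN) xy;
  by rewrite // (nbhd_f _ C2).
Qed.
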